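(* Every non-zero element of $\mathbb{C}^{\mathbb{Z}}_{\mathrm{fin}}$ is generic.
   Context: $\mathbb{Z}$ acts on $\mathbb{C}^{\mathbb{Z}}$ by $n\cdot(a_i)_{i\in\mathbb{Z}}=(a_{i+n})_{i\in\mathbb{Z}}$; the elements $n\cdot\mathbf{a}$ are the $\mathbb{Z}$-translates of $\mathbf{a}$. $\mathbb{C}^{\mathbb{Z}}_{\mathrm{fin}}$ is the subspace of $\mathbb{C}^{\mathbb{Z}}$ of sequences with only finitely many non-zero entries. An element $\mathbf{a}\in\mathbb{C}^{\mathbb{Z}}$ is generic if the multiset of all its $\mathbb{Z}$-translates is linearly independent. *)

From HB Require Import structures.
From mathcomp Require Import all_boot all_order all_algebra.
From mathcomp Require Import complex.
From mathcomp Require Import Rstruct.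
Set Implicit Arguments. Unset Strict Implicit. Unset Printing Implicit Defensive.
Import Order.TTheory GRing.Theory Num.Theory.
Local Open Scope ring_scope.

Definition C : fieldType := complex Rdefinitions.R.

Definition seqZ := int -> C.

Definition ztranslate (n : int) (a : seqZ) : seqZ := fun i => a (i + n).

Definition fin_supp (a : seqZ) : Prop :=
  exists s : seq int, forall i, a i != 0 -> i \in s.

(* Linear independence in C^Z of a family (v n)_{n in Z} indexed by Z
   (i.e. of the multiset of its members): every finite linear relation
   among distinct indices is trivial. *)
Definition lin_indep_family (v : int -> seqZ) : Prop :=
  forall (s : seq int) (c : int -> C), uniq s ->
    (forall i, \sum_(n <- s) c n * v n i = 0) ->
    forall n, n \in s -> c n = 0.

Definition generic (a : seqZ) : Prop :=
  lin_indep_family (fun n => ztranslate n a).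

From Stdlib Require Import FunctionalExtensionality.
From mathcomp Require Import all_boot all_order all_algebra.
Set Implicit Arguments. Unset Strict Implicit. Unset Printing Implicit Defensive.
Import Order.TTheory GRing.Theory Num.Theory.
Local Open Scope ring_scope.

(* Let m be the least index with a_m <> 0 and, in a relation
   sum_n c_n (n . a) = 0, let N be the largest index with c_N <> 0.  At the
   entry m - N every translate n . a with n < N vanishes, so the entry of the
   relation there is c_N a_m <> 0, a contradiction. *)

Lemma has_least d (T : orderType d) (P : pred T) (s : seq T) : has P s ->
  exists m, [/\ m \in s, P m & {in s, forall i, P i -> (m <= i)%O}].
Proof.
case/hasP=> i0 i0s Pi0; set t := [seq i <- s | P i].
have i0t : i0 \in t by rewrite mem_filter Pi0.
set m := \big[Order.min/i0]_(i <- t) i.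
have : m \in t.
  rewrite /m big_seq; apply: (big_ind (fun x => x \in t)) => // x y xt yt.
  by rewrite /Order.min; case: ifP.
rewrite mem_filter => /andP[Pm ms]; exists m; split=> // i si Pi.
by apply: ge_bigmin_seq; rewrite ?mem_filter ?Pi.
Qed.

Lemma has_greatest d (T : orderType d) (P : pred T) (s : seq T) : has P s ->
  exists m, [/\ m \in s, P m & {in s, forall i, P i -> (i <= m)%O}].
Proof. exact: (@has_least _ T^d). Qed.

Lemma fin_supp_lowest_nonzero (a : seqZ) : fin_supp a -> a <> (fun=> 0) ->
  exists2 m, a m != 0 & forall i, i < m -> a i = 0.
Proof.
move=> [s supp_a] a_nz.
have [|m [_ am least_m]] := has_least (P := fun i => a i != 0) (s := s).
  apply: contra_notT a_nz => /hasPn a0; apply: functional_extensionality => i.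
  by apply/eqP; apply: contraT => ai; move: (a0 _ (supp_a _ ai)); rewrite ai.
exists m => // i; apply: contraTeq => ai; rewrite -leNgt.
exact: least_m (supp_a _ ai) ai.
Qed.

Lemma sum_ztranslate_leading (a : seqZ) (c : int -> C) (s : seq int) m N :
  uniq s -> N \in s -> (forall i, i < m -> a i = 0) ->
  {in s, forall k, c k != 0 -> k <= N} ->
  \sum_(k <- s) c k * ztranslate k a (m - N) = c N * a m.
Proof.
move=> uniq_s Ns below_m top_N.
rewrite (bigD1_seq N) // big_seq_cond big1 => [|k /andP[ks kN]].
  by rewrite /= addr0 /ztranslate subrK.
have [->|ck] := eqVneq (c k) 0; first by rewrite mul0r.
have k_lt_N : k < N by rewrite lt_neqAle kN top_N.
by rewrite /ztranslate below_m ?mulr0 // addrAC ltrBlDr ltrD2l.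
Qed.

Theorem lemma2p2 (a : seqZ) : fin_supp a -> a <> (fun _ => 0) -> generic a.
Proof.
move=> supp_a a_nz; have [m am below_m] := fin_supp_lowest_nonzero supp_a a_nz.
move=> s c uniq_s rel n ns; apply/eqP; apply: contraT => cn.
have [|N [Ns cN top_N]] := has_greatest (P := fun k => c k != 0) (s := s).
  by apply/hasP; exists n.
have := sum_ztranslate_leading uniq_s Ns below_m top_N.
by rewrite rel => /esym cNam; move: (mulf_neq0 cN am); rewrite cNam eqxx.
Qed.
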